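(* Let $G$ be an undirected graph with non-negative edge weights, cellularly embedded on a compact connected orientable surface $\Sigma$ with at least one boundary component, and let $\overline{G}$ be its $\mathbb{Z}_2$-homology cover. Let $\gamma$ be a $\mathbb{Z}_2$-minimal cycle in $G$, and let $\sigma$ be any shortest path in $G$ that intersects $\gamma$. Then there is a $\mathbb{Z}_2$-minimal cycle $\gamma'$ homologous to $\gamma$ which is the projection of a shortest path $(\gamma',h)$ in $\overline{G}$ that starts with a subpath of $(\sigma,0)$ but does not otherwise intersect $(\sigma,0)$.
   Context: Cellular embedding: every face is an open disk. $\beta=2g+b-1$. Fix a tree-coforest decomposition $(T,L,F)$ ($T$ a spanning tree of $G$; $F^*$ a spanning forest of the dual graph $G^*$, whose vertices are faces and boundary cycles, with each component containing exactly one dual boundary vertex; $L=\{e_1,\dots,e_\beta\}$ the rest); adding $e_i^*$ to $F^*$ creates a dual path $\alpha_i$, and the signature $[e]\in\mathbb{Z}_2^\beta$ of edge $e$ has $i$th bit $1$ iff $\alpha_i$ traverses $e^*$ an odd number of times; the signature of a walk is the XOR of the signatures of its edges with multiplicity. The cover $\overline{G}$ has vertices $V\times\mathbb{Z}_2^\beta$ and, for each edge $uv$ and $h$, an edge $(u,h)\to(v,h\oplus[uv])$ with the weight of $uv$; projection $\pi(v,h)=v$. For a path $p$ in $G$ from $u$ to $v$ and $h\in\mathbb{Z}_2^\beta$, $(p,h)$ denotes its unique lift starting at $(u,h)$ (ending at $(v,h\oplus[p])$). A cycle is a closed walk; its length counts edge weights with multiplicity. Two cycles are $\mathbb{Z}_2$-homologous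 if the edge sets each traverses an odd number of times differ by a boundary subgraph (the set of edges with exactly one side in some fixed subset of faces); a cycle is $\mathbb{Z}_2$-minimal if it is a shortest cycle in its homology class. *)

From HB Require Import structures.
From mathcomp Require Import all_boot all_order all_algebra.
From mathcomp Require Import reals.
Set Implicit Arguments. Unset Strict Implicit. Unset Printing Implicit Defensive.
Import Order.TTheory GRing.Theory Num.Theory.

(* Combinatorial maps: cellular embeddings of graphs on compact orientable    *)
(* surfaces with boundary.  A graph is given by darts (half-edges); [alpha]   *)
(* is the fixed-point-free edge involution, [rot] the rotation around each    *)
(* vertex.  Faces are orbits of [phi d := rot (alpha d)].  Some faces are      *)
(* marked [bnd]: these are the boundary cycles (the holes of the surface).    *)
(* Every rotation system encodes a cellular embedding in an orientable        *)
(* surface; removing the open disks of the marked faces gives the surface     *)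
(* with boundary.                                                             *)

Record cmap := CMap {
  cV : finType;
  cE : finType;
  cD : finType;
  tail : cD -> cV;
  edge : cD -> cE;
  alpha : cD -> cD;
  rot : cD -> cD;
  bnd : pred cD
}.

Section CMapDefs.
Variable m : cmap.
Local Notation V := (cV m).
Local Notation E := (cE m).
Local Notation D := (cD m).

Definition dhead (d : D) : V := tail (alpha d).
Definition phi (d : D) : D := rot (alpha d).

(* Well-formedness: a cellular embedding of a connected graph in a compact  *)
(* connected orientable surface with at least one boundary component.       *)
Definition wf_cmap : Prop :=
  (forall d : D, alpha (alpha d) = d) /\
  (forall d : D, alpha d != d) /\
  injective (@rot m) /\
  (forall d d' : D, edge d = edge d' <-> (d' = d \/ d' = alpha d)) /\
  (forall e : E, exists d, edge d = e) /\
  (forall d d', tail d = tail d' <-> fconnect (@rot m) d d') /\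
  (forall v : V, exists d, tail d = v) /\
  (forall d, bnd (phi d) = bnd d) /\
  (exists d : D, bnd d) /\
  (forall d d' : D, connect (fun a b : D => (alpha a == b) || (rot a == b)) d d').

Section Walks.
Variables (A W : eqType) (src tgt : A -> W).
Fixpoint walk (x : W) (s : seq A) (y : W) : bool :=
  match s with
  | [::] => x == y
  | a :: s' => (src a == x) && walk (tgt a) s' y
  end.
Definition verts (x : W) (s : seq A) : seq W := x :: map tgt s.
End Walks.

Local Open Scope ring_scope.
Variable R : realType.
Variable w : E -> R.

Definition len (s : seq D) : R := \sum_(d <- s) w (edge d).

Definition is_cycle (u : V) (s : seq D) : bool := walk (@tail m) dhead u s u.

Definition is_path (x : V) (s : seq D) (y : V) : bool :=
  walk (@tail m) dhead x s y && uniq (verts dhead x s).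

Definition shortest_path (x : V) (s : seq D) (y : V) : Prop :=
  is_path x s y /\ forall s', walk (@tail m) dhead x s' y -> len s <= len s'.

Definition symd (A B : {set E}) : {set E} := (A :\: B) :|: (B :\: A).

Definition odd_edges (s : seq D) : {set E} :=
  [set e | odd (count (fun d => edge d == e) s)].

(* a set of (non-boundary) faces is a phi-closed set of darts avoiding bnd *)
Definition boundary_subgraph (C : {set E}) : Prop :=
  exists X : {set D},
    [/\ (forall d, (phi d \in X) = (d \in X)),
        (forall d, d \in X -> ~~ bnd d) &
        C = [set e | [exists d, (edge d == e) && ((d \in X) != (alpha d \in X))]]].

Definition homologous (s1 s2 : seq D) : Prop :=
  boundary_subgraph (symd (odd_edges s1) (odd_edges s2)).

Definition Z2_minimal (u : V) (s : seq D) : Prop :=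
  is_cycle u s /\
  forall u' s', is_cycle u' s' -> homologous s s' -> len s <= len s'.

Definition primal_rel (T : {set E}) : rel D :=
  fun a b => (rot a == b) || ((alpha a == b) && (edge a \in T)).

Definition spanning_tree (T : {set E}) : Prop :=
  (forall d d', connect (primal_rel T) d d') /\
  (forall d, edge d \in T -> ~~ connect (primal_rel (T :\ edge d)) d (alpha d)).

(* dual graph: darts in the same face are identified (phi), dual edge e*   *)
(* joins the faces of the two darts of e *)
Definition dual_rel (F : {set E}) : rel D :=
  fun a b => (phi a == b) || ((alpha a == b) && (edge a \in F)).

Definition reach_bnd (F : {set E}) (d : D) : bool :=
  [exists d', bnd d' && connect (dual_rel F) d d'].

(* F* is a spanning forest of G* each of whose components contains exactly *)
(* one dual boundary vertex                                                 *)
Definition dual_forest (F : {set E}) : Prop :=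
  [/\ (forall d, reach_bnd F d),
      (forall d, edge d \in F -> ~~ connect (dual_rel (F :\ edge d)) d (alpha d)) &
      (forall d d', bnd d -> bnd d' -> connect (dual_rel F) d d' ->
         fconnect phi d d')].

Definition tree_coforest (T F : {set E}) : Prop :=
  [/\ spanning_tree T, dual_forest F & T :&: F = set0].

Definition Lset (T F : {set E}) : {set E} := ~: (T :|: F).

(* edges whose duals lie on the F*-path from the face of d to the boundary *)
(* vertex of its component *)
Definition rootpath (F : {set E}) (d : D) : {set E} :=
  [set e in F | ~~ reach_bnd (F :\ e) d].

(* edges whose duals lie on alpha_i, where e_i = edge d: the dual path     *)
(* created by adding e_i* to F* *)
Definition dual_path (F : {set E}) (d : D) : {set E} :=
  [set e | (e == edge d) (+) (e \in rootpath F d) (+) (e \in rootpath F (alpha d))].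

(* signature [e], as the set of indices l in L whose bit is 1 *)
Definition signature (T F : {set E}) (e : E) : {set E} :=
  [set l in Lset T F | [exists d, (edge d == l) && (e \in dual_path F d)]].

(* vertices V * {set E} (labels are subsets of L), arcs (d, h) from         *)
(* (tail d, h) to (dhead d, h xor [edge d]) of weight w (edge d)             *)
Section Cover.
Variables T F : {set E}.
Definition csrc (a : D * {set E}) : V * {set E} := (tail a.1, a.2).
Definition ctgt (a : D * {set E}) : V * {set E} :=
  (dhead a.1, symd a.2 (signature T F (edge a.1))).
Definition clen (s : seq (D * {set E})) : R := \sum_(a <- s) w (edge a.1).

Definition cshortest_path (x : V * {set E}) (s : seq (D * {set E})) (y : V * {set E}) : Prop :=
  [/\ walk csrc ctgt x s y, uniq (verts ctgt x s) &
      forall s', walk csrc ctgt x s' y -> clen s <= clen s'].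

Fixpoint cover_lift (h : {set E}) (s : seq D) : seq (D * {set E}) :=
  match s with
  | [::] => [::]
  | d :: s' => (d, h) :: cover_lift (symd h (signature T F (edge d))) s'
  end.

Definition starts_with_subpath_only (sx : V * {set E}) (ss : seq (D * {set E}))
    (x : V * {set E}) (s : seq (D * {set E})) : Prop :=
  x \in verts ctgt sx ss /\
  exists a b, [/\ s = a ++ b, infix a ss &
                  all (fun z => z \notin verts ctgt sx ss) (map ctgt b)].
End Cover.

End CMapDefs.

From Pilot Require Import Defs.
From HB Require Import structures.
From mathcomp Require Import all_boot all_order all_algebra.
From mathcomp Require Import reals.
From mathcomp Require Import zify.
Import Order.TTheory GRing.Theory Num.Theory.
Set Implicit Arguments. Unset Strict Implicit. Unset Printing Implicit Defensive.

Section Walks.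
Variables (A W : eqType) (src tgt : A -> W).
Local Notation walk := (walk src tgt).
Local Notation verts := (verts tgt).

Lemma walk_cat x s1 s2 y :
  walk x (s1 ++ s2) y =
  walk x s1 (last x (map tgt s1)) && walk (last x (map tgt s1)) s2 y.
Proof.
elim: s1 x => [|a s1 IH] x /=; first by rewrite eqxx.
by rewrite IH andbA.
Qed.

Lemma walk_end x s y : walk x s y -> y = last x (map tgt s).
Proof.
elim: s x => [|a s IH] x /=; first by move/eqP.
by case/andP=> _ /IH.
Qed.

Lemma walk_concat x s1 z s2 y : walk x s1 z -> walk z s2 y -> walk x (s1 ++ s2) y.
Proof. by move=> w1 w2; rewrite walk_cat -(walk_end w1) w1. Qed.

Lemma size_verts x s : size (verts x s) = (size s).+1.
Proof. by rewrite /= size_map. Qed.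

Lemma verts_cat x s1 s2 : verts x (s1 ++ s2) = verts x s1 ++ map tgt s2.
Proof. by rewrite /Defs.verts map_cat. Qed.

Lemma verts_take x s n : verts x (take n s) = take n.+1 (verts x s).
Proof. by rewrite /Defs.verts /= map_take. Qed.

Lemma verts_drop x s i : i <= size s ->
  verts (nth x (verts x s) i) (drop i s) = drop i (verts x s).
Proof.
elim: s x i => [|a s IH] x [|i] //= lei.
by rewrite -IH //; congr (Defs.verts _ _ _); apply: set_nth_default; rewrite /= size_map.
Qed.

Lemma last_take_verts x s i : i <= size s ->
  last x (map tgt (take i s)) = nth x (verts x s) i.
Proof.
elim: s x i => [|a s IH] x [|i] //= lei.
by rewrite IH //; apply: set_nth_default; rewrite /= size_map.
Qed.

Lemma walk_take_drop x s y i : walk x s y -> i <= size s ->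
  walk x (take i s) (nth x (verts x s) i) /\ walk (nth x (verts x s) i) (drop i s) y.
Proof.
by move=> sw lei; move: sw; rewrite -{1}(cat_take_drop i s) walk_cat last_take_verts // => /andP.
Qed.

Lemma walk_shortcut x s y : walk x s y ->
  exists s', [/\ walk x s' y, uniq (verts x s') & subseq s' s].
Proof.
elim: {s}(size s) {-2}s (leqnn (size s)) x y => [|n IH] s sz x y sw.
  by move: sz sw; rewrite leqn0 => /nilP -> sw; exists [::].
have [su|/(uniqPn x) [i [j [ltij ltj eqij]]]] := boolP (uniq (verts x s)).
  by exists s; rewrite subseq_refl.
rewrite size_verts ltnS in ltj.
have [w1 _] := walk_take_drop sw (leq_trans (ltnW ltij) ltj).
have [_ w2] := walk_take_drop sw ltj.
have w12 : walk x (take i s ++ drop j s) y by apply: walk_concat w1 _; rewrite eqij.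
have [|s' [w' u' sub']] := IH _ _ _ _ w12.
  by rewrite size_cat size_takel ?size_drop; lia.
exists s'; split => //; apply: subseq_trans sub' _.
rewrite -{3}(cat_take_drop i s) cat_subseq ?subseq_refl //.
by rewrite -(subnK (ltnW ltij)) -drop_drop drop_subseq.
Qed.

Lemma closed_walk_rotate x s v : walk x s x -> v \in verts x s ->
  exists s', [/\ walk v s' v, perm_eq s s' & {subset verts v s' <= verts x s}].
Proof.
move=> sw vs; set n := index v (verts x s).
have len : n <= size s by rewrite -ltnS -(size_verts x) index_mem.
have [w1 w2] := walk_take_drop sw len; rewrite nth_index // in w1 w2.
have perm_rot : perm_eq s (drop n s ++ take n s).
  by rewrite -{1}(cat_take_drop n s) perm_catC.
exists (drop n s ++ take n s); split => //; first exact: walk_concat w2 w1.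
move=> z; rewrite in_cons => /predU1P[->|] //.
by rewrite -(perm_mem (perm_map tgt perm_rot)) => zs; rewrite in_cons zs orbT.
Qed.

Lemma closed_walk_rotate_first x0 u s (S : seq W) : walk u s u ->
  has (fun v => v \in verts u s) S -> exists2 i, i < size S &
  exists s', [/\ walk (nth x0 S i) s' (nth x0 S i), perm_eq s s' &
                 {in verts (nth x0 S i) s', forall t, t \notin take i S}].
Proof.
move=> sw meet; exists (find (fun v => v \in verts u s) S); first by rewrite -has_find.
have [s' [s'w ss' s'sub]] := closed_walk_rotate sw (nth_find x0 meet).
exists s'; split=> // t /s'sub ts; apply/negP => tpre.
by have := has_take (find (fun v => v \in verts u s) S) meet; rewrite ltnn => /hasPn/(_ t tpre); rewrite ts.
Qed.

Lemma split_last_visit (q : pred W) x s : q x -> exists s1 s2,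
  [/\ s = s1 ++ s2, q (last x (map tgt s1)) & all (predC q) (map tgt s2)].
Proof.
elim: s x => [|a s IH] x qx; first by exists [::], [::].
have [qa|nqa] := boolP (q (tgt a)).
  by have [s1 [s2 [-> q1 q2]]] := IH _ qa; exists (a :: s1), s2.
have [s1 [s2 [-> q1 q2]]] := IH _ qx.
case: s1 q1 => [_|b s1 q1]; first by exists [::], (a :: s2); rewrite /= nqa.
by exists (a :: b :: s1), s2.
Qed.

End Walks.

Section WeightedWalks.
Variables (A W : eqType) (src tgt : A -> W) (R : numDomainType) (wt : A -> R).
Local Notation walk := (walk src tgt).
Local Notation verts := (verts tgt).
Local Open Scope ring_scope.
Local Notation wlen s := (\sum_(a <- s) wt a).

Lemma wlen_subseq s t : (forall a, 0 <= wt a) -> subseq s t -> wlen s <= wlen t.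
Proof.
move=> wt_ge0; elim: t s => [|b t IH] [|a s] //=; rewrite ?big_nil ?sumr_ge0 //.
case: eqP => [-> /IH|_ /IH le_st]; first by rewrite !big_cons lerD2l.
by apply: le_trans le_st _; rewrite big_cons lerDr.
Qed.

Lemma shortest_walk_segment x sp y i k s :
  walk x sp y -> (forall s', walk x s' y -> wlen sp <= wlen s') -> (i <= k <= size sp)%N ->
  walk (nth x (verts x sp) i) s (nth x (verts x sp) k) ->
  wlen (take (k - i) (drop i sp)) <= wlen s.
Proof.
move=> spw spmin /andP[leik lek] sw.
have [w1 _] := walk_take_drop spw (leq_trans leik lek).
have [_ w3] := walk_take_drop spw lek.
have := spmin _ (walk_concat w1 (walk_concat sw w3)).
rewrite -{1}(cat_take_drop i sp) -{1}(cat_take_drop (k - i) (drop i sp)) drop_drop subnK //.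
by rewrite !big_cat /= lerD2l lerD2r.
Qed.

Lemma shortest_detour x sp y i P z :
  walk x sp y -> uniq (verts x sp) -> (forall s, walk x s y -> wlen sp <= wlen s) ->
  (forall a, 0 <= wt a) -> (i <= size sp)%N -> walk (nth x (verts x sp) i) P z ->
  {in verts (nth x (verts x sp) i) P, forall t, t \notin take i (verts x sp)} ->
  exists a b, [/\ walk (nth x (verts x sp) i) (a ++ b) z,
    uniq (verts (nth x (verts x sp) i) (a ++ b)), wlen (a ++ b) <= wlen P,
    infix a sp & all (fun t => t \notin verts x sp) (map tgt b)].
Proof.
move=> spw spu spmin wt_ge0 lei; set S := verts x sp; set z0 := nth x S i => Pw Pout.
have z0S : z0 \in S by rewrite mem_nth // size_verts ltnS.
have [s1 [s2 [Ps t1S s2out]]] := split_last_visit tgt P z0S.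
set t1 := last z0 (map tgt s1) in t1S; move: Pw; rewrite Ps walk_cat => /andP[w1 w2].
set k := index t1 S; have t1k : nth x S k = t1 by rewrite nth_index.
have lek : (k <= size sp)%N by rewrite -ltnS -(size_verts tgt x) index_mem.
have leik : (i <= k)%N.
  rewrite leqNgt; apply: contraTN (Pout t1 _) => [ltki|]; last first.
    by rewrite Ps verts_cat mem_cat mem_last.
  rewrite negbK -t1k -(nth_take x ltki) mem_nth // size_takel // size_verts; lia.
set a := take (k - i) (drop i sp).
have aw : walk z0 a t1.
  have [_ dw] := walk_take_drop spw lei.
  have [|aw _] := walk_take_drop dw (i := k - i); first by rewrite size_drop; lia.
  by rewrite verts_drop // nth_drop subnKC // (set_nth_default x) ?index_mem // -/S t1k in aw.
have [b [bw bu bsub]] := walk_shortcut w2.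
have bout : all (fun t => t \notin S) (map tgt b).
  by apply/allP => t /(mem_subseq (map_subseq tgt bsub)); apply: (allP s2out).
exists a, b; split=> //.
- exact: walk_concat aw bw.
- rewrite verts_cat cat_uniq verts_take verts_drop // take_uniq ?drop_uniq //=.
  move: bu => /= /andP[_ ->]; rewrite andbT; apply/hasPn => t tb.
  by apply: contra (allP bout t tb) => /mem_take /mem_drop.
- rewrite !big_cat lerD ?(wlen_subseq wt_ge0 bsub) //.
  by apply: shortest_walk_segment spw spmin _ _; rewrite ?leik ?t1k.
- exact: infix_trans _ (infix_take _ _) (infix_drop _ _).
Qed.

End WeightedWalks.

Lemma connect_sym_steps (T : finType) (e : rel T) :
  (forall a b, e a b -> connect e b a) -> forall a b, connect e a b -> connect e b a.
Proof.
move=> back a _ /connectP[p ep ->].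
elim: p a ep => [|c p IH] a /=; first by rewrite connect0.
by case/andP=> eac /IH h; apply: connect_trans h (back _ _ eac).
Qed.

Lemma xor_pred1 (I : finType) (j : I) (Z : pred I) :
  \big[addb/false]_(i : I) ((i == j) && Z i) = Z j.
Proof. by rewrite (bigD1 j) //= eqxx big1 ?addbF // => i /negbTE ->. Qed.

Lemma in_symd (m : cmap) (A B : {set cE m}) x : (x \in symd A B) = (x \in A) (+) (x \in B).
Proof. by rewrite /symd !inE; case: (x \in A); case: (x \in B). Qed.

Section CombinatorialMap.
Variable m : cmap.
Hypothesis wf : wf_cmap m.
Local Notation D := (cD m).
Local Notation E := (cE m).

Lemma alphaK : involutive (@alpha m).
Proof. by case: wf. Qed.

Lemma alpha_neq (d : D) : alpha d != d.
Proof. by case: wf => _ []. Qed.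

Lemma rot_inj : injective (@Defs.rot m).
Proof. by case: wf => _ [] _ []. Qed.

Lemma edge_eq (d d' : D) : edge d = edge d' -> d' = d \/ d' = alpha d.
Proof. by case: wf => _ [] _ [] _ [] /(_ d d') [+ _]. Qed.

Lemma edge_alpha (d : D) : edge (alpha d) = edge d.
Proof. by case: wf => _ [] _ [] _ [] /(_ d (alpha d)) [_ ->]; last right. Qed.

Lemma tail_fconnect (d d' : D) : tail d = tail d' <-> fconnect (@Defs.rot m) d d'.
Proof. by case: wf => _ [] _ [] _ [] _ [] _ []. Qed.

Lemma phi_inj : injective (@phi m).
Proof. by move=> a b /rot_inj eq_ab; rewrite -(alphaK a) eq_ab alphaK. Qed.

Lemma ex_dart (e : E) : exists d : D, edge d == e.
Proof. by case: wf => _ [] _ [] _ [] _ [] /(_ e) [d <-]; exists d. Qed.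

Definition dart_of (e : E) : D := xchoose (ex_dart e).

Lemma edge_dart_of e : edge (dart_of e) = e.
Proof. exact/eqP/(xchooseP (ex_dart e)). Qed.

Lemma dart_of_edge (a : D) : dart_of (edge a) = a \/ dart_of (edge a) = alpha a.
Proof. by apply: edge_eq; rewrite edge_dart_of. Qed.

Lemma dart_of_edge_inv (G : pred D) : (forall a, G (alpha a) = G a) ->
  forall a, G (dart_of (edge a)) = G a.
Proof. by move=> G_alpha a; case: (dart_of_edge a) => ->. Qed.

Lemma exists_dart_of (P : pred D) : (forall a, P (alpha a) = P a) ->
  forall e, [exists d, (edge d == e) && P d] = P (dart_of e).
Proof.
move=> P_alpha e; apply/existsP/idP => [[d /andP[/eqP <- Pd]]|Pe].
  by rewrite dart_of_edge_inv.
by exists (dart_of e); rewrite edge_dart_of eqxx.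
Qed.

Lemma xor_darts_by_edges (G : pred D) :
  \big[addb/false]_(a : D) G a =
  \big[addb/false]_(e : E) (G (dart_of e) (+) G (alpha (dart_of e))).
Proof.
rewrite (partition_big (@edge m) xpredT) //; apply: eq_bigr => e _.
rewrite (bigD1 (dart_of e)) /= ?edge_dart_of ?eqxx //.
rewrite (bigD1 (alpha (dart_of e))) /=; last by rewrite edge_alpha edge_dart_of eqxx alpha_neq.
rewrite big1 ?addbF // => a /andP[/andP[/eqP ea na1] na2].
have /edge_eq[] : edge (dart_of e) = edge a by rewrite ea edge_dart_of.
  by move=> eq_a; rewrite eq_a eqxx in na1.
by move=> eq_a; rewrite eq_a eqxx in na2.
Qed.

Definition cross (S : pred D) (d : D) : bool := S d (+) S (alpha d).

Lemma cross_alpha S d : cross S (alpha d) = cross S d.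
Proof. by rewrite /cross alphaK addbC. Qed.

(* Every face crosses the cut of a vertex set an even number of times. *)
Lemma cross_vertex_face_even (S Y : pred D) :
  (forall a, S (Defs.rot a) = S a) -> (forall a, Y (phi a) = Y a) ->
  \big[addb/false]_(e : E) (cross S (dart_of e) && cross Y (dart_of e)) = false.
Proof.
move=> S_rot Y_phi.
have face_even : \big[addb/false]_(a : D) (Y a && cross S a) = false.
  rewrite (eq_bigr (fun a => (Y a && S a) (+) (Y a && S (phi a)))); last first.
    by move=> a _; rewrite /cross /phi S_rot andb_addr.
  rewrite big_split /= [X in X (+) _](reindex_inj phi_inj) /=.
  by rewrite (eq_bigr (fun a => Y a && S (phi a))) ?addbb // => a _; rewrite Y_phi.
rewrite xor_darts_by_edges in face_even; rewrite -[RHS]face_even.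
apply: eq_bigr => e _; rewrite cross_alpha /cross.
by case: (S _); case: (S _); case: (Y _); case: (Y _).
Qed.

Lemma dual_rel_sym G (a b : D) : connect (dual_rel G) a b -> connect (dual_rel G) b a.
Proof.
apply: connect_sym_steps => {}a {}b /orP[/eqP <-|/andP[/eqP <- aG]].
  have : fconnect (@phi m) (phi a) a by rewrite fconnect_sym ?fconnect1 //; apply: phi_inj.
  by apply: connect_sub => x y /eqP <-; rewrite connect1 // /dual_rel eqxx.
by rewrite connect1 // /dual_rel alphaK eqxx edge_alpha aG orbT.
Qed.

Lemma primal_rel_sym G (a b : D) : connect (primal_rel G) a b -> connect (primal_rel G) b a.
Proof.
apply: connect_sym_steps => {}a {}b /orP[/eqP <-|/andP[/eqP <- aG]].
  have : fconnect (@Defs.rot m) (Defs.rot a) a.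
    by rewrite fconnect_sym ?fconnect1 //; apply: rot_inj.
  by apply: connect_sub => x y /eqP <-; rewrite connect1 // /primal_rel eqxx.
by rewrite connect1 // /primal_rel alphaK eqxx edge_alpha aG orbT.
Qed.

Lemma dual_rel_mono (G G' : {set E}) a b : G \subset G' ->
  connect (dual_rel G) a b -> connect (dual_rel G') a b.
Proof.
move=> sGG'; apply: connect_sub => x y /orP[xy|/andP[xy xG]]; apply: connect1.
  by rewrite /dual_rel xy.
by rewrite /dual_rel xy (subsetP sGG' _ xG) orbT.
Qed.

Lemma reach_bnd_connect G (a b : D) :
  connect (dual_rel G) a b -> reach_bnd G b -> reach_bnd G a.
Proof.
move=> ab /existsP[d /andP[bd bd_conn]]; apply/existsP; exists d.
by rewrite bd (connect_trans ab).
Qed.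

Lemma reach_bnd_phi G (x : D) : reach_bnd G (phi x) = reach_bnd G x.
Proof.
have x_phix : connect (dual_rel G) x (phi x) by rewrite connect1 // /dual_rel eqxx.
by apply/idP/idP; apply: reach_bnd_connect; last apply: dual_rel_sym.
Qed.

Lemma reach_bnd_bnd G (x : D) : bnd x -> reach_bnd G x.
Proof. by move=> bx; apply/existsP; exists x; rewrite bx connect0. Qed.

End CombinatorialMap.

Section TreeCoforest.
Variable m : cmap.
Hypothesis wf : wf_cmap m.
Local Notation D := (cD m).
Local Notation E := (cE m).
Variables T F : {set E}.
Hypothesis tc : tree_coforest T F.

Definition cutoff (f : E) (d : D) : bool := ~~ reach_bnd (F :\ f) d.

Lemma cutoff_phi f d : cutoff f (phi d) = cutoff f d.
Proof. by rewrite /cutoff reach_bnd_phi. Qed.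

Lemma connect_dual_setD1 f d a b : edge d = f -> connect (dual_rel F) a b ->
  [\/ connect (dual_rel (F :\ f)) a b, connect (dual_rel (F :\ f)) d b |
      connect (dual_rel (F :\ f)) (alpha d) b].
Proof.
move=> df /connectP[p pth ->] {b}.
elim: p a pth => [|c p IH] a /=; first by rewrite connect0; constructor.
case/andP=> ac /IH; have [ac'|] := boolP (dual_rel (F :\ f) a c).
  by case=> cp; [apply: Or31; apply: connect_trans (connect1 ac') cp | apply: Or32 | apply: Or33].
move: ac; rewrite /dual_rel !inE; case: (phi a == c) => //= /andP[/eqP <- aF].
rewrite aF eqxx andbT /= negbK => /eqP af.
have /(edge_eq wf)[<-|->] : edge d = edge a by rewrite af df.
  by case=> cp; [apply: Or33 | apply: Or32 | apply: Or33].
by rewrite (alphaK wf) => -[cp|cp|cp]; [apply: Or32 | apply: Or32 | apply: Or33].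
Qed.

Lemma cross_cutoff_self d : edge d \in F -> cross (cutoff (edge d)) d.
Proof.
case: tc => _ [F_reach F_acyclic F_bnd] _ dF; set G := F :\ edge d.
have sGF : G \subset F by apply: subD1set.
have one_side : reach_bnd G d || reach_bnd G (alpha d).
  have /existsP[b /andP[bb db]] := F_reach d.
  have Gb := reach_bnd_bnd G bb.
  by case: (connect_dual_setD1 (erefl (edge d)) db) => /reach_bnd_connect/(_ Gb) ->; rewrite ?orbT.
have not_both : ~~ (reach_bnd G d && reach_bnd G (alpha d)).
  apply/negP => /andP[/existsP[b1 /andP[bb1 db1]] /existsP[b2 /andP[bb2 db2]]].
  have d_ad : connect (dual_rel F) d (alpha d) by rewrite connect1 // /dual_rel eqxx dF orbT.
  have b1b2 : fconnect (@phi m) b1 b2.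
    apply: F_bnd bb1 bb2 (connect_trans (dual_rel_sym wf (dual_rel_mono sGF db1)) _).
    exact: connect_trans d_ad (dual_rel_mono sGF db2).
  apply: (negP (F_acyclic d dF)); apply: connect_trans db1 _.
  apply: connect_trans _ (dual_rel_sym wf db2).
  by apply: connect_sub b1b2 => x y /eqP <-; rewrite connect1 // /dual_rel eqxx.
rewrite /cross /cutoff -/G.
by move: one_side not_both; case: (reach_bnd G d); case: (reach_bnd G (alpha d)).
Qed.

Lemma cross_cutoffF d f : edge d \in F -> cross (cutoff f) d = (f == edge d).
Proof.
move=> dF; have [->|fd] := eqVneq f (edge d); first exact: cross_cutoff_self.
have d_ad : connect (dual_rel (F :\ f)) d (alpha d).
  by rewrite connect1 // /dual_rel eqxx !inE (eq_sym (edge d)) fd dF orbT.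
rewrite /cross /cutoff (_ : reach_bnd _ (alpha d) = reach_bnd (F :\ f) d) ?addbb //.
by apply/idP/idP; apply: reach_bnd_connect; last exact: dual_rel_sym.
Qed.

Lemma dual_path_alpha d : dual_path F (alpha d) = dual_path F d.
Proof.
apply/setP => e; rewrite /dual_path !inE (edge_alpha wf) (alphaK wf).
by case: (e == _); case: (e \in F); case: (reach_bnd _ d); case: (reach_bnd _ (alpha d)).
Qed.

Lemma in_dual_path e d :
  (e \in dual_path F d) = (e == edge d) (+) ((e \in F) && cross (cutoff e) d).
Proof. by rewrite /dual_path /rootpath !inE /cross /cutoff; case: (e \in F); rewrite ?addbA ?addbF. Qed.

Lemma in_signature e d : edge d \in Lset T F ->
  (edge d \in signature T F e) = (e \in dual_path F d).
Proof.
move=> dL; rewrite /signature inE dL (exists_dart_of wf (P := fun a => e \in dual_path F a)).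
  by case: (dart_of_edge wf d) => ->; rewrite ?dual_path_alpha.
by move=> a; rewrite dual_path_alpha.
Qed.

Definition tree_side (d : D) : pred D := connect (primal_rel (T :\ edge d)) d.

Lemma tree_side_rot d a : tree_side d (Defs.rot a) = tree_side d a.
Proof.
have a_rota : connect (primal_rel (T :\ edge d)) a (Defs.rot a).
  by rewrite connect1 // /primal_rel eqxx.
apply/idP/idP => da; first exact: connect_trans da (primal_rel_sym wf a_rota).
exact: connect_trans da a_rota.
Qed.

Lemma cross_tree_side d e : edge d \in T -> e \in T ->
  cross (tree_side d) (dart_of wf e) = (e == edge d).
Proof.
case: tc => [[_ T_acyclic] _ _] dT eT; have [->|ed] := eqVneq e (edge d).
  rewrite (dart_of_edge_inv wf (cross_alpha wf _)) /cross /tree_side connect0.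
  by rewrite (negbTE (T_acyclic d dT)).
set a := dart_of wf e.
have a_aa : connect (primal_rel (T :\ edge d)) a (alpha a).
  by rewrite connect1 // /primal_rel eqxx !inE /a edge_dart_of ed eT orbT.
rewrite /cross /tree_side.
rewrite (_ : connect _ d (alpha a) = connect (primal_rel (T :\ edge d)) d a) ?addbb //.
by apply/idP/idP => da; apply: connect_trans da _; first apply: (primal_rel_sym wf).
Qed.

Section ZeroSignatureCycle.
Variable C : {set E}.
Hypothesis C_signature0 : forall l, l \in Lset T F ->
  \big[addb/false]_(e : E) ((e \in C) && (l \in signature T F e)) = false.
Hypothesis C_cycle : forall S : pred D, (forall a, S (Defs.rot a) = S a) ->
  \big[addb/false]_(e : E) ((e \in C) && cross S (dart_of wf e)) = false.

(* The faces whose root path in [F*] meets [C] an odd number of times. *)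
Definition potential (x : D) : bool :=
  \big[addb/false]_(f : E) ((f \in C) && (f \in F) && cutoff f x).

Lemma potential_phi x : potential (phi x) = potential x.
Proof. by apply: eq_bigr => f _; rewrite cutoff_phi. Qed.

Lemma cross_potentialE d : cross potential d =
  \big[addb/false]_(f : E) ((f \in C) && (f \in F) && cross (cutoff f) d).
Proof. by rewrite /cross /potential -big_split; apply: eq_bigr => f _; rewrite andb_addr. Qed.

Lemma cross_potentialF d : edge d \in F -> cross potential d = (edge d \in C).
Proof.
move=> dF; rewrite cross_potentialE.
rewrite (eq_bigr (fun f => (f == edge d) && ((f \in C) && (f \in F)))) ?xor_pred1 ?dF ?andbT //.
by move=> f _; rewrite cross_cutoffF // andbC.
Qed.

Lemma cross_potentialL d : edge d \in Lset T F -> cross potential d = (edge d \in C).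
Proof.
move=> dL; have := C_signature0 dL.
rewrite (eq_bigr (fun e => ((e == edge d) && (e \in C)) (+)
                           ((e \in C) && (e \in F) && cross (cutoff e) d))); last first.
  move=> e _; rewrite in_signature // in_dual_path.
  by case: (e == _); case: (e \in C); case: (e \in F).
rewrite big_split /= xor_pred1 -cross_potentialE.
by case: (edge d \in C); case: (cross potential d).
Qed.

Lemma cross_potential_notT d : edge d \notin T -> cross potential d = (edge d \in C).
Proof.
move=> dT; have [/cross_potentialF//|dF] := boolP (edge d \in F).
by apply: cross_potentialL; rewrite !inE (negbTE dT) (negbTE dF).
Qed.

Lemma cross_potentialT d : edge d \in T -> cross potential d = (edge d \in C).
Proof.
move=> dT; set t := edge d; have := C_cycle (tree_side_rot d).
rewrite (eq_bigr (fun e => ((e == t) && (t \in C)) (+)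
    (cross (tree_side d) (dart_of wf e) && cross potential (dart_of wf e)) (+)
    ((e == t) && cross potential (dart_of wf e)))); last first.
  move=> e _; have [eT|eT] := boolP (e \in T).
    rewrite cross_tree_side //; have [->|_] := eqVneq e t; last by rewrite andbF.
    by rewrite /=; case: (t \in C); case: (cross potential _).
  have et : (e == t) = false by apply: contraNF eT => /eqP ->.
  by rewrite et cross_potential_notT edge_dart_of //= addbF andbC.
rewrite !big_split /= xor_pred1 (cross_vertex_face_even wf (tree_side_rot d) potential_phi).
rewrite xor_pred1 /t (dart_of_edge_inv wf (cross_alpha wf _)).
by case: (t \in C); case: (cross potential d).
Qed.

Lemma cross_potential d : cross potential d = (edge d \in C).
Proof. by have [/cross_potentialT|/cross_potential_notT] := boolP (edge d \in T). Qed.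

Lemma zero_signature_cycle_boundary : boundary_subgraph C.
Proof.
exists [set x | potential x]; split.
- by move=> d; rewrite !inE potential_phi.
- move=> d; rewrite inE; apply: contraTN => bd.
  by rewrite /potential big1 // => f _; rewrite /cutoff reach_bnd_bnd ?andbF.
- apply/setP => e; rewrite inE (exists_dart_of wf) => [|a]; last by rewrite !inE (alphaK wf) eq_sym.
  by rewrite !inE negb_eqb -[_ (+) _]/(cross potential _) cross_potential edge_dart_of.
Qed.

End ZeroSignatureCycle.
End TreeCoforest.

Section WalkSignature.
Variables (m : cmap) (T F : {set cE m}).
Local Notation D := (cD m).
Local Notation E := (cE m).

Lemma symdA (A B C : {set E}) : symd (symd A B) C = symd A (symd B C).
Proof. by apply/setP => l; rewrite !in_symd addbA. Qed.

Lemma symd0 (A : {set E}) : symd A set0 = A.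
Proof. by apply/setP => l; rewrite in_symd inE addbF. Qed.

Lemma symd_inj (A : {set E}) : injective (symd A).
Proof. by move=> B C /setP eqBC; apply/setP => l; move: (eqBC l); rewrite !in_symd => /addbI. Qed.

Definition walk_signature (s : seq D) : {set E} :=
  [set l | \big[addb/false]_(a <- s) (l \in signature T F (edge a))].

Lemma walk_signature_nil : walk_signature [::] = set0.
Proof. by apply/setP => l; rewrite !inE big_nil. Qed.

Lemma walk_signature_cons a s :
  walk_signature (a :: s) = symd (signature T F (edge a)) (walk_signature s).
Proof. by apply/setP => l; rewrite in_symd [in LHS]inE [X in _ (+) X]inE big_cons. Qed.

Lemma walk_signature_perm s s' : perm_eq s s' -> walk_signature s = walk_signature s'.
Proof. by move=> ss'; apply/setP => l; rewrite !inE (perm_big _ ss'). Qed.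

End WalkSignature.

Section WalkHomology.
Variable m : cmap.
Hypothesis wf : wf_cmap m.
Local Notation D := (cD m).
Local Notation E := (cE m).

Lemma xor_walk_odd_edges (s : seq D) (q : pred E) :
  \big[addb/false]_(a <- s) q (edge a) =
  \big[addb/false]_(e : E) ((e \in odd_edges s) && q e).
Proof.
elim: s => [|a s IH]; first by rewrite big_nil big1 // => e _; rewrite inE.
rewrite big_cons IH [RHS](eq_bigr (fun e => ((e == edge a) && q e) (+) ((e \in odd_edges s) && q e))).
  by rewrite big_split /= xor_pred1.
by move=> e _; rewrite !inE /= oddD oddb andb_addl eq_sym.
Qed.

Lemma odd_edges_cat (s1 s2 : seq D) :
  odd_edges (s1 ++ s2) = symd (odd_edges s1) (odd_edges s2).
Proof. by apply/setP => e; rewrite in_symd !inE count_cat oddD. Qed.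

Lemma fconnect_rot_invariant (S : pred D) : (forall a, S (Defs.rot a) = S a) ->
  forall a b, fconnect (@Defs.rot m) a b -> S a = S b.
Proof.
move=> S_rot a _ /connectP[p pth ->].
by elim: p a pth => [|c p IH] a //= /andP[/eqP <- /IH <-]; rewrite S_rot.
Qed.

Lemma xor_walk_cross (S : pred D) : (forall a, S (Defs.rot a) = S a) ->
  forall x s y, walk (@tail m) (@dhead m) x s y ->
  \big[addb/false]_(a <- s) cross S a =
  [exists a, (tail a == x) && S a] (+) [exists a, (tail a == y) && S a].
Proof.
move=> S_rot; have S_vertex a : S a = [exists a', (tail a' == tail a) && S a'].
  apply/idP/existsP => [Sa|[a' /andP[/eqP a'a Sa']]]; first by exists a; rewrite eqxx.
  by rewrite -(fconnect_rot_invariant S_rot (iffLR (tail_fconnect wf a' a) a'a)).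
move=> x s; elim: s x => [|a s IH] x y /=; first by move/eqP => <-; rewrite big_nil addbb.
case/andP=> /eqP ax /IH IHs; rewrite big_cons IHs /cross S_vertex [S (alpha a)]S_vertex ax.
by rewrite /dhead addbA -[X in X (+) _]addbA addbb addbF.
Qed.

Lemma homologous_trans (s1 s2 s3 : seq D) :
  homologous s1 s2 -> homologous s2 s3 -> homologous s1 s3.
Proof.
move=> [X1 [X1phi X1bnd E1]] [X2 [X2phi X2bnd E2]].
exists [set d | (d \in X1) (+) (d \in X2)]; split.
- by move=> d; rewrite !inE X1phi X2phi.
- move=> d; rewrite inE; case: (boolP (d \in X1)) => [d1 _|_ d2]; [exact: X1bnd | exact: X2bnd].
apply/setP => e; rewrite in_symd.
have -> : (e \in odd_edges s1) (+) (e \in odd_edges s3) =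
    (e \in symd (odd_edges s1) (odd_edges s2)) (+) (e \in symd (odd_edges s2) (odd_edges s3)).
  by rewrite !in_symd addbA addbK.
rewrite E1 E2 !inE !(exists_dart_of wf) ?inE; last 3 first.
- by move=> a; rewrite !inE (alphaK wf) eq_sym.
- by move=> a; rewrite (alphaK wf) eq_sym.
- by move=> a; rewrite (alphaK wf) eq_sym.
by case: (dart_of wf e \in X1); case: (dart_of wf e \in X2);
   case: (alpha (dart_of wf e) \in X1); case: (alpha (dart_of wf e) \in X2).
Qed.

Variables T F : {set E}.
Hypothesis tc : tree_coforest T F.

Lemma homologous_of_walk_signature u1 s1 u2 s2 : is_cycle u1 s1 -> is_cycle u2 s2 ->
  walk_signature T F s1 = walk_signature T F s2 -> homologous s1 s2.
Proof.
move=> c1 c2 sig12; apply: (zero_signature_cycle_boundary (wf := wf) tc) => [l _|S S_rot].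
  rewrite -odd_edges_cat -xor_walk_odd_edges big_cat /=.
  by move/setP/(_ l): sig12; rewrite !inE => ->; rewrite addbb.
rewrite -odd_edges_cat -(xor_walk_odd_edges _ (fun e => cross S (dart_of wf e))).
rewrite (eq_bigr (cross S)) => [|a _]; last exact: (dart_of_edge_inv wf (cross_alpha wf S)).
by rewrite big_cat /= (xor_walk_cross S_rot c1) (xor_walk_cross S_rot c2) !addbb.
Qed.

End WalkHomology.

Section Cover.
Variables (m : cmap) (T F : {set cE m}).
Local Notation D := (cD m).
Local Notation V := (cV m).
Local Notation E := (cE m).
Local Notation wsig := (walk_signature T F).
Local Notation lift := (cover_lift T F).

Lemma map_fst_cover_lift h s : map fst (lift h s) = s.
Proof. by elim: s h => [|a s IH] h //=; rewrite IH. Qed.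

Lemma size_cover_lift h s : size (lift h s) = size s.
Proof. by rewrite -(size_map fst) map_fst_cover_lift. Qed.

Lemma verts_cover_lift x h s : map fst (verts (ctgt T F) (x, h) (lift h s)) = verts (@dhead m) x s.
Proof. by rewrite /= ; congr cons; elim: s x h => [|a s IH] x h //=; rewrite IH. Qed.

Lemma nth_verts_cover_lift x h s i : (i <= size s)%N ->
  (nth (x, h) (verts (ctgt T F) (x, h) (lift h s)) i).1 = nth x (verts (@dhead m) x s) i.
Proof. by move=> lei; rewrite -(nth_map _ x) ?verts_cover_lift // size_verts size_cover_lift. Qed.

Lemma walk_cover_lift h u s v : walk (@tail m) (@dhead m) u s v ->
  walk (@csrc m) (ctgt T F) (u, h) (lift h s) (v, symd h (wsig s)).
Proof.
elim: s u h => [|a s IH] u h /=; first by move/eqP => ->; rewrite walk_signature_nil symd0.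
case/andP => /eqP <- /(IH _ (symd h (signature T F (edge a)))).
by rewrite /csrc eqxx walk_signature_cons -symdA.
Qed.

Lemma cover_walkP (z t : V * {set E}) s : walk (@csrc m) (ctgt T F) z s t ->
  [/\ walk (@tail m) (@dhead m) z.1 (map fst s) t.1,
      t.2 = symd z.2 (wsig (map fst s)) & lift z.2 (map fst s) = s].
Proof.
elim: s z => [|[a h'] s IH] [u h] /=; first by move/eqP => <-; rewrite walk_signature_nil symd0.
rewrite /csrc /= => /andP[/eqP [<- <-] /IH[/= sw -> ->]].
by rewrite eqxx walk_signature_cons symdA.
Qed.

Lemma cover_lift_labels x (h : {set E}) (s : seq D) : h \subset Lset T F ->
  all (fun z : V * {set E} => z.2 \subset Lset T F) (verts (ctgt T F) (x, h) (lift h s)).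
Proof.
elim: s x h => [|a s IH] x h hL /=; rewrite hL //=.
have /(IH (dhead a)) /= /andP[-> ->] : symd h (signature T F (edge a)) \subset Lset T F.
  apply/subsetP => l; rewrite in_symd; case: (boolP (l \in h)) => [/(subsetP hL)//|_].
  by rewrite /= inE => /andP[].
by [].
Qed.

Variables (R : realType) (w : E -> R).
Local Open Scope ring_scope.

Lemma clen_map_fst s : clen w s = len w (map fst s).
Proof. by rewrite /clen /len big_map. Qed.

Lemma clen_cover_lift h s : clen w (lift h s) = len w s.
Proof. by rewrite clen_map_fst map_fst_cover_lift. Qed.

Lemma cover_lift_shortest_path h x p y : shortest_path w x p y ->
  [/\ walk (@csrc m) (ctgt T F) (x, h) (lift h p) (y, symd h (wsig p)),
      uniq (verts (ctgt T F) (x, h) (lift h p)) &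
      forall s, walk (@csrc m) (ctgt T F) (x, h) s (y, symd h (wsig p)) ->
        clen w (lift h p) <= clen w s].
Proof.
case=> /andP[pw pu] pmin; split; first exact: walk_cover_lift.
  by apply: (map_uniq (f := fst)); rewrite verts_cover_lift.
by move=> s /cover_walkP[/= /pmin ps _ _]; rewrite clen_cover_lift clen_map_fst.
Qed.

End Cover.

Section Minimality.
Variables (R : realType) (m : cmap) (w : cE m -> R).
Hypothesis wf : wf_cmap m.
Local Notation D := (cD m).
Local Open Scope ring_scope.

Lemma Z2_minimal_shorter u (g : seq D) v g' : Z2_minimal w u g -> is_cycle v g' ->
  homologous g g' -> len w g' <= len w g -> Z2_minimal w v g'.
Proof.
move=> [_ gmin] g'cyc gg' g'g; split=> // u2 s s_cyc g's.
exact: le_trans g'g (gmin _ _ s_cyc (homologous_trans wf gg' g's)).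
Qed.

Variables T F : {set cE m}.
Hypothesis tc : tree_coforest T F.

Lemma Z2_minimal_of_cover_walk u (g : seq D) v h Q : Z2_minimal w u g ->
  walk (@csrc m) (ctgt T F) (v, h) Q (v, symd h (walk_signature T F g)) ->
  uniq (verts (ctgt T F) (v, h) Q) -> clen w Q <= len w g ->
  [/\ Z2_minimal w v (map fst Q), homologous g (map fst Q) &
      cshortest_path w T F (v, h) Q (last (v, h) (map (ctgt T F) Q))].
Proof.
move=> gmin Qw Qu Qg; have [gcyc glen] := gmin.
have cover_len s : walk (@csrc m) (ctgt T F) (v, h) s (v, symd h (walk_signature T F g)) ->
    [/\ is_cycle v (map fst s), homologous g (map fst s) & len w g <= clen w s].
  case/cover_walkP => /= scyc /symd_inj sig_s _.
  have gs := homologous_of_walk_signature wf tc gcyc scyc sig_s.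
  by rewrite clen_map_fst; split=> //; apply: glen scyc gs.
have [Qcyc gQ _] := cover_len _ Qw; split=> //.
  by apply: (Z2_minimal_shorter gmin Qcyc gQ); rewrite -clen_map_fst.
by rewrite -(walk_end Qw); split=> // s /cover_len[_ _]; apply: le_trans Qg.
Qed.

End Minimality.

Unset Implicit Arguments. Set Strict Implicit. Set Printing Implicit Defensive.
Local Open Scope ring_scope.

Theorem lemma5p4 (R : realType) (m : cmap) (w : cE m -> R) :
  wf_cmap m ->
  (forall e, 0 <= w e) ->
  forall T F : {set cE m}, tree_coforest T F ->
  forall (u : cV m) (g : seq (cD m)), Z2_minimal w u g ->
  forall (x y : cV m) (p : seq (cD m)), shortest_path w x p y ->
  has (fun v => v \in verts (@dhead m) u g) (verts (@dhead m) x p) ->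
  exists (u' : cV m) (g' : seq (cD m)) (h : {set cE m}),
    [/\ h \subset Lset T F,
        Z2_minimal w u' g',
        homologous g g',
        cshortest_path w T F (u', h) (cover_lift T F h g')
          (last (u', h) (map (ctgt T F) (cover_lift T F h g'))) &
        starts_with_subpath_only T F (x, set0) (cover_lift T F set0 p)
          (u', h) (cover_lift T F h g')].
Proof.
move=> wf w0 T F tc u g gmin x y p psh meet; have [gcyc _] := gmin.
have [i ltip [gv [gvw gvperm gv_out]]] := closed_walk_rotate_first x gcyc meet.
rewrite size_verts ltnS in ltip; set v := nth x _ i in gvw gv_out.
have [spw spu spmin] := cover_lift_shortest_path T F set0 psh.
set S := verts (ctgt T F) (x, set0) (cover_lift T F set0 p).
set z0 := nth (x, set0) S i; set h := z0.2.
have z0E : z0 = (v, h) by rewrite [z0]surjective_pairing nth_verts_cover_lift.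
have z0S : z0 \in S by rewrite mem_nth // size_verts size_cover_lift ltnS.
have gv_lift_out : {in verts (ctgt T F) z0 (cover_lift T F h gv), forall t, t \notin take i S}.
  move=> t; rewrite z0E => /(map_f fst); rewrite verts_cover_lift => /gv_out.
  by apply: contra => /(map_f fst); rewrite map_take verts_cover_lift.
have lei : (i <= size (cover_lift T F set0 p))%N by rewrite size_cover_lift.
have Pw : walk (@csrc m) (ctgt T F) z0 (cover_lift T F h gv) (v, symd h (walk_signature T F g)).
  by rewrite z0E (walk_signature_perm _ _ gvperm); apply: walk_cover_lift.
have [a [b [Qw Qu Qlen ainf bout]]] :=
  shortest_detour (wt := fun c => w (edge c.1)) spw spu spmin (fun _ => w0 _) lei Pw gv_lift_out.
rewrite -/z0 z0E in Qw Qu; have [_ _ Qlift] := cover_walkP Qw.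
have [|g'min gg' Qshortest] := Z2_minimal_of_cover_walk wf tc gmin Qw Qu.
  by rewrite (perm_big _ gvperm : len w g = len w gv) -(clen_cover_lift T F w h).
exists v, (map fst (a ++ b)), h; rewrite Qlift; split=> //.
  exact: (allP (cover_lift_labels x p (sub0set _)) z0 z0S).
by split; [rewrite -z0E | exists a, b].
Qed.
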